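(* Let $R$ be a ring with identity, let ${}_RM$ be a finitely generated semisimple left $R$-module and let $\varphi:M\to M$ be a nilpotent $R$-endomorphism. If $\{x_{\gamma,i}\mid\gamma\in\Gamma,1\le i\le k_\gamma\}$ and $\{y_{\delta,j}\mid\delta\in\Delta,1\le j\le l_\delta\}$ are nilpotent Jordan normal bases of ${}_RM$ with respect to $\varphi$, then there exists a bijection $\pi:\Gamma\to\Delta$ such that $k_\gamma=l_{\pi(\gamma)}$ for all $\gamma\in\Gamma$. Thus the sizes of the blocks of a nilpotent Jordan normal base are unique up to a permutation of the blocks.
   Context: For an $R$-endomorphism $\varphi$ of a left $R$-module ${}_RM$, a subset $\{x_{\gamma,i}\mid\gamma\in\Gamma,1\le i\le k_\gamma\}\subseteq M$ (with integers $k_\gamma\ge1$) is a nilpotent Jordan normal base of ${}_RM$ with respect to $\varphi$ if each submodule $Rx_{\gamma,i}$ is simple, $M=\bigoplus_{\gamma\in\Gamma,1\le i\le k_\gamma}Rx_{\gamma,i}$ is a direct sum, $\varphi(x_{\gamma,i})=x_{\gamma,i+1}$ for $1\le i<k_\gamma$, $\varphi(x_{\gamma,k_\gamma})=0$, and the set $\{k_\gamma\mid\gamma\in\Gamma\}$ is bounded. $\Gamma$ is the set of blocks and $k_\gamma$ is the size of block $\gamma$. *)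

From HB Require Import structures.
From mathcomp Require Import all_boot all_order all_algebra.
From Stdlib Require List.
Set Implicit Arguments. Unset Strict Implicit. Unset Printing Implicit Defensive.
Import GRing.Theory.
Local Open Scope ring_scope.

Section ModuleDefs.
Variables (R : pzRingType) (M : lmodType R).

Definition is_submod (N : M -> Prop) : Prop :=
  [/\ N 0, (forall u v, N u -> N v -> N (u + v)) & (forall (r : R) v, N v -> N (r *: v))].

Definition simple_submod (N : M -> Prop) : Prop :=
  [/\ is_submod N, (exists v, N v /\ v <> 0) &
      (forall N' : M -> Prop, is_submod N' -> (forall v, N' v -> N v) ->
         (forall v, N' v -> v = 0) \/ (forall v, N v -> N' v))].

Definition cyclic_submod (x : M) : M -> Prop := fun v => exists r : R, v = r *: x.

Definition fin_gen_mod : Prop :=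
  exists g : seq M, forall m : M, exists r : nat -> R,
    m = \sum_(j < size g) r j *: g`_j.

Definition semisimple_mod : Prop :=
  exists (I : Type) (N : I -> M -> Prop),
    (forall i, simple_submod (N i)) /\
    (forall m : M, exists (s : seq I) (f : I -> M),
        (forall i, List.In i s -> N i (f i)) /\ m = \sum_(i <- s) f i).

Definition nilpotent_endo (phi : M -> M) : Prop :=
  exists n : nat, forall m : M, iter n phi m = 0.

Definition nilpotent_jordan_base (phi : M -> M) (G : Type) (k : G -> nat)
    (x : G -> nat -> M) : Prop :=
  let valid (p : G * nat) := (1 <= p.2 <= k p.1)%N in
  (forall g, 1 <= k g)%N /\
  (forall g i, (1 <= i <= k g)%N -> simple_submod (cyclic_submod (x g i))) /\
  (forall m : M, exists (s : seq (G * nat)) (r : G * nat -> R),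
      (forall p, List.In p s -> valid p) /\
      m = \sum_(p <- s) r p *: x p.1 p.2) /\
  (forall (s : seq (G * nat)) (r : G * nat -> R),
      List.NoDup s -> (forall p, List.In p s -> valid p) ->
      \sum_(p <- s) r p *: x p.1 p.2 = 0 ->
      forall p, List.In p s -> r p *: x p.1 p.2 = 0) /\
  (forall g i, (1 <= i < k g)%N -> phi (x g i) = x g i.+1) /\
  (forall g, phi (x g (k g)) = 0) /\
  (exists K : nat, forall g, (k g <= K)%N).

End ModuleDefs.

(* The nil index of v is the number of nonzero vectors among v, phi v, phi^2 v, ...; for
   the base vector x_{g,i} it is k_g - i + 1, so phi^j kills x_{g,i} iff its nil index is
   at most j.  The base vectors killed by phi^j are independent and span ker phi^j, and a
   Steinitz exchange argument for families of simple cyclic submodules shows that no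
   independent family of simple cyclic submodules has more members than such a spanning
   family.  Hence c_j = #{base vectors killed by phi^j} depends only on phi, and
   c_j - c_{j-1} is the number of blocks of size >= j.  So both bases have the same
   multiset of block sizes, which is the multiset of nil indices of the chain heads
   x_{g,1}; matching heads of equal nil index gives the bijection.  Finite generation only
   serves to make the bases finite. *)

From HB Require Import structures.
From mathcomp Require Import all_boot all_order all_algebra.
From mathcomp Require Import zify.
From Stdlib Require Import Classical ClassicalEpsilon.
Set Implicit Arguments. Unset Strict Implicit. Unset Printing Implicit Defensive.
Import GRing.Theory.
Local Open Scope ring_scope.

Section SimpleSpan.
Variables (R : pzRingType) (M : lmodType R).

Definition spanned_by (L : seq M) (v : M) : Prop :=
  exists c : M -> R, v = \sum_(w <- L) c w *: w.

Definition independent (L : seq M) : Prop :=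
  uniq L /\ forall c : M -> R,
    \sum_(w <- L) c w *: w = 0 -> forall w, w \in L -> c w *: w = 0.

Definition simple_seq (L : seq M) : Prop :=
  forall v, v \in L -> simple_submod (cyclic_submod v).

Lemma cyclic_submodP (u : M) : is_submod (cyclic_submod u).
Proof.
split; first by exists 0; rewrite scale0r.
- by move=> _ _ [r ->] [s ->]; exists (r + s); rewrite scalerDl.
- by move=> t _ [r ->]; exists (t * r); rewrite scalerA.
Qed.

Lemma simple_cyclic_neq0 (v : M) : simple_submod (cyclic_submod v) -> v != 0.
Proof. by case=> _ [_ [[r ->] nz]] _; apply: contra_not_neq nz => ->; rewrite scaler0. Qed.

Lemma simple_cyclic_gen (v : M) (r : R) : simple_submod (cyclic_submod v) ->
  r *: v != 0 -> exists s, s *: (r *: v) = v.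
Proof.
case=> _ _ minimal rv_neq0.
have sub u : cyclic_submod (r *: v) u -> cyclic_submod v u.
  by case=> s ->; exists (s * r); rewrite scalerA.
have [zero | full] := minimal _ (cyclic_submodP (r *: v)) sub.
- by case/eqP: rv_neq0; apply: zero; exists 1; rewrite scale1r.
- by have [|s def_v] := full v; [exists 1; rewrite scale1r | exists s].
Qed.

Lemma simple_cyclic_ker (v : M) (f : {linear M -> M}) :
  simple_submod (cyclic_submod v) -> f v != 0 ->
  forall r, f (r *: v) = 0 -> r *: v = 0.
Proof.
case=> _ _ minimal fv_neq0 r frv.
have ker_submod : is_submod (fun u => cyclic_submod v u /\ f u = 0).
  split; first by split; [exists 0; rewrite scale0r | rewrite linear0].
  - move=> _ _ [[s ->] fs] [[t ->] ft].
    by split; [exists (s + t); rewrite scalerDl | rewrite linearD fs ft addr0].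
  - move=> t _ [[s ->] fs].
    by split; [exists (t * s); rewrite scalerA | rewrite linearZ /= fs scaler0].
have [zero | full] := minimal _ ker_submod (fun u => @proj1 _ _).
- by apply: zero; split; first exists r.
- by have [|_ fv0] := full v; [exists 1; rewrite scale1r | rewrite fv0 eqxx in fv_neq0].
Qed.

Lemma span0 (L : seq M) : spanned_by L 0.
Proof. by exists (fun _ => 0); rewrite big1 // => w _; rewrite scale0r. Qed.

Lemma spanD (L : seq M) (u v : M) :
  spanned_by L u -> spanned_by L v -> spanned_by L (u + v).
Proof.
move=> [c ->] [d ->]; exists (fun w => c w + d w).
by rewrite -big_split; apply: eq_bigr => w _; rewrite scalerDl.
Qed.

Lemma spanZ (L : seq M) (r : R) (v : M) : spanned_by L v -> spanned_by L (r *: v).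
Proof.
move=> [c ->]; exists (fun w => r * c w).
by rewrite scaler_sumr; apply: eq_bigr => w _; rewrite scalerA.
Qed.

Lemma span_sum (I : Type) (s : seq I) (P : pred I) (F : I -> M) (L : seq M) :
  (forall i, P i -> spanned_by L (F i)) -> spanned_by L (\sum_(i <- s | P i) F i).
Proof. by move=> spanF; apply: big_ind => //; [apply: span0 | apply: spanD]. Qed.

Lemma span_mem (L : seq M) (w : M) : uniq L -> w \in L -> spanned_by L w.
Proof.
move=> uL wL; exists (fun u => if u == w then 1 else 0).
rewrite (bigD1_seq w) //= eqxx scale1r big1 ?addr0 // => u /negbTE ->.
by rewrite scale0r.
Qed.

Lemma span_trans (L L' : seq M) (v : M) :
  (forall w, w \in L' -> spanned_by L w) -> spanned_by L' v -> spanned_by L v.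
Proof. by move=> spanL' [c ->]; rewrite big_seq; apply: span_sum => w /spanL' ?; apply: spanZ. Qed.

Lemma big_seq_restrict (A B : seq M) (F : M -> M) : uniq A -> uniq B -> {subset A <= B} ->
  \sum_(w <- B) (if w \in A then F w else 0) = \sum_(w <- A) F w.
Proof.
move=> uA uB sAB; rewrite -big_mkcond -big_filter; apply: perm_big.
apply: uniq_perm; [exact: filter_uniq | exact: uA |].
by move=> w; rewrite mem_filter; case wA: (w \in A) => //=; rewrite sAB.
Qed.

Lemma independent_sub (L L' : seq M) :
  independent L -> uniq L' -> {subset L' <= L} -> independent L'.
Proof.
move=> [uL indL] uL' sub; split => // c sum0 w wL'.
have := indL (fun u => if u \in L' then c u else 0) _ w (sub w wL'); rewrite wL'; apply.
rewrite -[RHS]sum0 -(big_seq_restrict (fun u => c u *: u) uL' uL sub).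
by apply: eq_bigr => u _; case: (u \in L'); rewrite ?scale0r.
Qed.

Lemma independent_cons_span (v : M) (L : seq M) :
  independent (v :: L) -> spanned_by L v -> v = 0.
Proof.
move=> [uvL indL] [c def_v]; move: (uvL) => /= /andP[vL _].
pose d w := if w == v then -1 else c w.
have : \sum_(w <- v :: L) d w *: w = 0.
  rewrite big_cons /d eqxx scaleN1r [X in _ + X]big_seq_cond.
  rewrite (eq_bigr (fun w => c w *: w)) -?big_seq_cond -?def_v ?addNr // => w /andP[wL _].
  by rewrite ifN //; apply: contraNneq vL => <-.
move/indL/(_ v (mem_head _ _))/eqP; rewrite /d eqxx scaleN1r oppr_eq0.
by move/eqP.
Qed.

Lemma independent_cons (v : M) (L : seq M) : independent L ->
  simple_submod (cyclic_submod v) -> ~ spanned_by L v -> independent (v :: L).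
Proof.
move=> [uL indL] simple_v nspan; split.
  by rewrite /= uL andbT; apply/negP => /(span_mem uL).
move=> d; rewrite big_cons => /eqP; rewrite addr_eq0 => /eqP def_dv.
have dv0 : d v *: v = 0.
  apply/eqP; apply: contraT => dv_neq0; case: nspan.
  have [s <-] := simple_cyclic_gen simple_v dv_neq0.
  by rewrite def_dv -scaleN1r; do 2 apply: spanZ; exists d.
move/eqP: def_dv; rewrite dv0 eq_sym oppr_eq0 => /eqP/indL indL'.
by move=> w; rewrite in_cons => /orP[/eqP -> | /indL'].
Qed.

Lemma independent_map (L : seq M) (f : M -> M) (c : M -> R) :
  independent (map f L) -> {in L &, injective f} ->
  \sum_(v <- L) c v *: f v = 0 -> forall v, v \in L -> c v *: f v = 0.
Proof.
move=> [_ ind_fL] f_inj sum0 v vL.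
pose c' u := c (nth 0 L (index u (map f L))).
have := ind_fL c' _ (f v) (map_f f vL); rewrite /c' nth_index_map //; apply.
by rewrite big_map -[RHS]sum0 big_seq [RHS]big_seq; apply: eq_bigr => u uL;
  rewrite nth_index_map.
Qed.

End SimpleSpan.

Section Exchange.
Variables (R : pzRingType) (M : lmodType R).
Implicit Types (v p : M) (us vs F : seq M) (c : M -> R).

Lemma exchange_pivot v us F c : independent (v :: us) -> v != 0 ->
  {subset us <= F} -> uniq F -> v = \sum_(w <- F) c w *: w ->
  exists2 p, p \in F & (p \notin us) && (c p *: p != 0).
Proof.
move=> ind_vus v_neq0 sub uF def_v; apply/hasP; apply: contraT => /hasPn out0.
rewrite -(negbTE v_neq0); apply/eqP/(independent_cons_span ind_vus); exists c.
have uus : uniq us by case: ind_vus => /= /andP[].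
rewrite -(big_seq_restrict (fun w => c w *: w) uus uF sub) def_v.
apply: eq_big_seq => w /out0; case: (w \in us) => //=.
by rewrite negbK => /eqP.
Qed.

Lemma independent_rem_nspan F c p v : independent F -> p \in F ->
  v = \sum_(w <- F) c w *: w -> c p *: p != 0 -> ~ spanned_by (rem p F) v.
Proof.
move=> [uF indF] pF def_v cp_neq0 [e def_v'].
pose e' w := if w == p then 0 else e w.
have sum_e' : \sum_(w <- F) e' w *: w = v.
  rewrite def_v' rem_filter // big_filter [RHS]big_mkcond; apply: eq_bigr => w _.
  by rewrite /e' /=; case: eqP; rewrite ?scale0r.
have : \sum_(w <- F) (c w - e' w) *: w = 0.
  by under eq_bigr do rewrite scalerBl; rewrite sumrB -def_v sum_e' subrr.
by move/indF/(_ p pF); rewrite /e' eqxx subr0 => /eqP; rewrite (negbTE cp_neq0).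
Qed.

Lemma exchange_step F c p v : independent F -> simple_seq F ->
  simple_submod (cyclic_submod v) -> p \in F ->
  v = \sum_(w <- F) c w *: w -> c p *: p != 0 ->
  [/\ independent (v :: rem p F), simple_seq (v :: rem p F)
    & forall w, w \in F -> spanned_by (v :: rem p F) w].
Proof.
move=> ind_F simple_F simple_v pF def_v cp_neq0.
have [uF _] := ind_F; set F' := v :: rem p F.
have nspan := independent_rem_nspan ind_F pF def_v cp_neq0.
have ind_F' : independent F'.
  apply: independent_cons nspan => //.
  by apply: independent_sub ind_F (rem_uniq _ uF) _ => w /mem_rem.
split=> // [w | w wF].
  by rewrite inE => /orP[/eqP -> // | /mem_rem]; apply: simple_F.
have uF' := ind_F'.1.
have [<- | wp] := eqVneq p w; last first.
  rewrite eq_sym in wp.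
  by apply: span_mem; rewrite // inE (mem_rem_uniq _ uF) inE wp wF orbT.
have [s <-] := simple_cyclic_gen (simple_F p pF) cp_neq0; apply: spanZ.
have -> : c p *: p = v - \sum_(w <- rem p F) c w *: w.
  by rewrite def_v (bigD1_seq p) //= rem_filter // big_filter addrK.
apply: spanD; first by apply: span_mem; rewrite ?mem_head.
rewrite -scaleN1r; apply: spanZ; rewrite big_seq; apply: span_sum => u urem.
by apply/spanZ/span_mem; rewrite // inE urem orbT.
Qed.

(* [us] are the vectors of the independent family already exchanged into [F]. *)
Lemma exchange_size_le vs us F : independent F -> simple_seq F ->
  {subset us <= F} -> independent (us ++ vs) -> simple_seq vs ->
  (forall v, v \in vs -> spanned_by F v) -> (size us + size vs <= size F)%N.
Proof.
elim: vs us F => [|v vs IH] us F ind_F simple_F sub ind_usvs simple_vs span_vs.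
  by rewrite addn0 uniq_leq_size //; case: ind_usvs; rewrite cats0.
have vvs : v \in v :: vs by rewrite mem_head.
have [c def_v] := span_vs v vvs.
have perm_v : perm_eq (us ++ v :: vs) (v :: us ++ vs).
  by apply/permPl; exact: (perm_catCA us [:: v] vs).
have ind_vusvs : independent (v :: us ++ vs).
  apply: (independent_sub ind_usvs) => [|w]; last by rewrite -(perm_mem perm_v).
  by rewrite -(perm_uniq perm_v); case: ind_usvs.
have ind_vus : independent (v :: us).
  apply: (independent_sub ind_vusvs) => [|w wvus]; last by rewrite -cat_cons mem_cat wvus.
  by case: ind_vusvs; rewrite -cat_cons cat_uniq => /andP[].
have [p pF /andP[pus cp_neq0]] :=
  exchange_pivot ind_vus (simple_cyclic_neq0 (simple_vs v vvs)) sub ind_F.1 def_v.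
have [ind_F' simple_F' span_F'] :=
  exchange_step ind_F simple_F (simple_vs v vvs) pF def_v cp_neq0.
have := IH (v :: us) _ ind_F' simple_F' _ ind_vusvs _ _.
rewrite /= size_rem // prednK ?addSnnS; last by move: pF; rewrite -index_mem; lia.
apply=> [w | w wvs | w wvs].
- rewrite !inE => /orP[-> // | wus]; rewrite (mem_rem_uniq _ ind_F.1) inE sub // andbT.
  by rewrite (contraNneq _ pus) ?orbT // => <-.
- by apply: simple_vs; rewrite inE wvs orbT.
- by apply: span_trans span_F' _; apply: span_vs; rewrite inE wvs orbT.
Qed.

Lemma independent_size_le (L F : seq M) : independent F -> simple_seq F ->
  independent L -> simple_seq L -> (forall v, v \in L -> spanned_by F v) ->
  (size L <= size F)%N.
Proof. by move=> *; apply: (exchange_size_le (us := [::])). Qed.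

End Exchange.

Section SeqIn.
Variables (A : Type) (B : eqType) (f : A -> B).

Lemma In_map_mem (s : seq A) (a : A) : List.In a s -> f a \in map f s.
Proof. by elim: s => //= b s IH [-> | /IH]; rewrite inE ?eqxx // => ->; rewrite orbT. Qed.

Lemma map_mem_In (s : seq A) (y : B) : y \in map f s -> exists2 a, List.In a s & y = f a.
Proof.
elim: s => //= a s IH; rewrite inE => /orP[/eqP -> | /IH [b bs ->]]; first by exists a; [left |].
by exists b; first right.
Qed.

Lemma uniq_map_NoDup (s : seq A) : uniq (map f s) -> List.NoDup s.
Proof.
elim: s => [|a s IH] /=; first by constructor.
case/andP=> fa_notin /IH nd_s; constructor=> // a_in.
by case/negP: fa_notin; apply: In_map_mem.
Qed.

End SeqIn.

Lemma count_leq_split (T : Type) (h : T -> nat) (s : seq T) j :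
  count (fun v => h v <= j.+1)%N s =
  (count (fun v => h v == j.+1) s + count (fun v => h v <= j)%N s)%N.
Proof. by elim: s => //= v s ->; case: ltngtP => /=; lia. Qed.

Lemma perm_eq_count_geq (s t : seq nat) : 0%N \notin s -> 0%N \notin t ->
  (forall j, 0 < j -> count (leq j) s = count (leq j) t)%N -> perm_eq s t.
Proof.
move=> s_gt0 t_gt0 count_st; apply/allP => -[|n] _ /=.
  by rewrite (count_memPn s_gt0) (count_memPn t_gt0).
have split_geq u : count (leq n.+1) u = (count (pred1 n.+1) u + count (leq n.+2) u)%N.
  by elim: u => //= m u ->; case: ltngtP => /=; lia.
by have := split_geq t; rewrite -!count_st // split_geq => /eqP; rewrite eqn_add2r.
Qed.

(* Sort both lists by weight and match them position by position. *)
Lemma perm_eq_map_match (T : eqType) (h : T -> nat) (s t : seq T) :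
  uniq s -> uniq t -> perm_eq (map h s) (map h t) ->
  exists f : T -> T, [/\ {in s, forall u, f u \in t /\ h (f u) = h u},
    {in s &, injective f} & forall v, v \in t -> exists2 u, u \in s & v = f u].
Proof.
move=> us ut perm_st.
set s' := sort (relpre h leq) s; set t' := sort (relpre h leq) t.
have eq_sorted : map h s' = map h t'.
  rewrite -!sort_map; apply/perm_sortP => //.
  - exact: leq_total.
  - exact: leq_trans.
  - exact: anti_leq.
have size_st : size s' = size t' by rewrite -(size_map h) eq_sorted size_map.
have [us' ut'] : uniq s' /\ uniq t' by rewrite !sort_uniq.
pose f u := nth u t' (index u s').
have index_lt u : u \in s -> (index u s' < size t')%N by rewrite -size_st index_mem mem_sort.
exists f; split.
- move=> u us_u; split; first by rewrite -(mem_sort (relpre h leq)) mem_nth ?index_lt.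
  rewrite -(nth_map u (h u)) ?index_lt // -eq_sorted (nth_map u) ?size_st ?index_lt //.
  by rewrite nth_index ?mem_sort.
- move=> u u' us_u us_u'; rewrite /f [nth u' _ _](set_nth_default u) ?index_lt //.
  move=> /eqP; rewrite nth_uniq ?index_lt // => /eqP eq_idx.
  by rewrite -[u](nth_index u (s := s')) ?mem_sort // eq_idx nth_index ?mem_sort.
- move=> v vt; have lt_v : (index v t' < size s')%N by rewrite size_st index_mem mem_sort.
  exists (nth v s' (index v t')); first by rewrite -(mem_sort (relpre h leq)) mem_nth.
  by rewrite /f index_uniq // nth_index ?mem_sort.
Qed.

Lemma bijection_of_perm_eq (A B : Type) (T : eqType) (a : A -> T) (b : B -> T)
    (h : T -> nat) (s t : seq T) :
  uniq s -> uniq t -> injective a -> injective b ->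
  (forall i, a i \in s) -> (forall u, u \in s -> exists i, u = a i) ->
  (forall j, b j \in t) -> (forall v, v \in t -> exists j, v = b j) ->
  perm_eq (map h s) (map h t) ->
  exists pi : A -> B, bijective pi /\ forall i, h (a i) = h (b (pi i)).
Proof.
move=> us ut a_inj b_inj a_in s_a b_in t_b perm_st.
have [f [f_in f_inj f_onto]] := perm_eq_map_match us ut perm_st.
have pi_ex i : exists j, b j = f (a i).
  by have [/t_b [j ->] _] := f_in _ (a_in i); exists j.
have inv_ex j : exists i, f (a i) = b j.
  by have [u /s_a [i ->] ->] := f_onto _ (b_in j); exists i.
pose pi i := proj1_sig (constructive_indefinite_description _ (pi_ex i)).
pose inv j := proj1_sig (constructive_indefinite_description _ (inv_ex j)).
have pi_def i : b (pi i) = f (a i) by rewrite /pi; case: constructive_indefinite_description.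
have inv_def j : f (a (inv j)) = b j by rewrite /inv; case: constructive_indefinite_description.
exists pi; split=> [|i]; last by rewrite pi_def; case: (f_in _ (a_in i)).
exists inv => [i | j]; last by apply: b_inj; rewrite pi_def inv_def.
by apply/a_inj/f_inj; rewrite ?a_in // inv_def pi_def.
Qed.

Section LinearIterate.
Variables (R : pzRingType) (M : lmodType R).

Definition lin_iter (f : {linear M -> M}) (n : nat) : M -> M := iter n f.

Lemma lin_iter_is_linear (f : {linear M -> M}) (n : nat) : linear (lin_iter f n).
Proof. by elim: n => [|n IH] r u v //=; rewrite /lin_iter /= -/(lin_iter f n) IH linearP. Qed.

End LinearIterate.

HB.instance Definition _ (R : pzRingType) (M : lmodType R) (f : {linear M -> M}) (n : nat) :=
  GRing.isLinear.Build R M M *:%R (lin_iter f n) (lin_iter_is_linear f n).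

Lemma lin_iterSr (R : pzRingType) (M : lmodType R) (f : {linear M -> M}) n v :
  lin_iter f n.+1 v = lin_iter f n (f v).
Proof. exact: iterSr. Qed.

Section NilIndexDef.
Variables (R : pzRingType) (M : lmodType R).

(* Only the first [N] iterates are inspected. *)
Fixpoint nil_index (f : M -> M) (N : nat) (v : M) : nat :=
  if N is n.+1 then (if v == 0 then 0 else (nil_index f n (f v)).+1) else 0.

(* For an enumeration of a Jordan base these are the chain heads x_{g,1}. *)
Definition chain_heads (f : M -> M) (X : seq M) : seq M := [seq v <- X | v \notin map f X].

End NilIndexDef.

Section JordanBase.
Variables (R : pzRingType) (M : lmodType R) (phi : {linear M -> M}).
Variables (G : Type) (k : G -> nat) (x : G -> nat -> M).
Hypothesis jb : nilpotent_jordan_base phi k x.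

Local Notation xp p := (x p.1 p.2).

Let k_gt0 g : (0 < k g)%N.
Proof. by case: jb. Qed.

Let x_simple g i : (1 <= i <= k g)%N -> simple_submod (cyclic_submod (x g i)).
Proof. by case: jb => _ [simple_x _]; apply: simple_x. Qed.

Let x_span (m : M) : exists (s : seq (G * nat)) (r : G * nat -> R),
  (forall p, List.In p s -> (1 <= p.2 <= k p.1)%N) /\ m = \sum_(p <- s) r p *: xp p.
Proof. by case: jb => _ [_ [span_x _]]; apply: span_x. Qed.

Let x_direct (s : seq (G * nat)) (r : G * nat -> R) :
  List.NoDup s -> (forall p, List.In p s -> (1 <= p.2 <= k p.1)%N) ->
  \sum_(p <- s) r p *: xp p = 0 -> forall p, List.In p s -> r p *: xp p = 0.
Proof. by case: jb => _ [_ [_ [direct_x _]]]; apply: direct_x. Qed.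

Let phi_x g i : (1 <= i < k g)%N -> phi (x g i) = x g i.+1.
Proof. by case: jb => _ [_ [_ [_ [phi_x _]]]]; apply: phi_x. Qed.

Let phi_x_last g : phi (x g (k g)) = 0.
Proof. by case: jb => _ [_ [_ [_ [_ [phi_last _]]]]]; apply: phi_last. Qed.

Lemma x_neq0 g i : (1 <= i <= k g)%N -> x g i != 0.
Proof. by move/x_simple/simple_cyclic_neq0. Qed.

Lemma x_inj g i h j : (1 <= i <= k g)%N -> (1 <= j <= k h)%N ->
  x g i = x h j -> g = h /\ i = j.
Proof.
move=> gi hj xgi_hj; apply: NNPP => neq.
have {}neq : (g, i) <> (h, j) by case=> ? ?; apply: neq.
pose r p : R := if excluded_middle_informative (p = (g, i)) then 1 else -1.
have rgi : r (g, i) = 1 by rewrite /r; case: excluded_middle_informative.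
have rhj : r (h, j) = -1.
  by rewrite /r; case: excluded_middle_informative => // e; exfalso; apply: neq; rewrite e.
have : r (g, i) *: x g i = 0.
  apply: (@x_direct [:: (g, i); (h, j)]); last by left.
  - apply: List.NoDup_cons; last exact/List.NoDup_cons/List.NoDup_nil.
    by case=> [/esym/neq | []].
  - by move=> p [<- | [<- | []]].
  - by rewrite big_cons big_seq1 rgi rhj scale1r scaleN1r xgi_hj subrr.
by move/eqP; rewrite rgi scale1r (negbTE (x_neq0 gi)).
Qed.

Lemma x_head_inj : injective (fun g => x g 1).
Proof. by move=> g h /x_inj[] //; rewrite k_gt0. Qed.

Lemma lin_iter_x n g i : (1 <= i <= k g)%N ->
  lin_iter phi n (x g i) = if (i + n <= k g)%N then x g (i + n) else 0.
Proof.
elim: n i => [|n IH] i gi; first by rewrite addn0 (andP gi).2.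
rewrite lin_iterSr; have [lt_ik | ge_ik] := ltnP i (k g).
  by rewrite phi_x ?IH ?addSnnS //; case/andP: gi => ->.
have -> : i = k g by apply/eqP; rewrite eqn_leq ge_ik (andP gi).2.
by rewrite phi_x_last linear0 ifN // -ltnNge -addSnnS leq_addr.
Qed.

Lemma lin_iter_x_eq0 n g i : (1 <= i <= k g)%N ->
  (lin_iter phi n (x g i) == 0) = (k g < i + n)%N.
Proof.
move=> gi; rewrite lin_iter_x // ltnNge; case: ifP => [le_ink | _]; last by rewrite eqxx.
by rewrite (negbTE (x_neq0 _)) //; lia.
Qed.

Definition basis_vec (v : M) : Prop := exists g i, (1 <= i <= k g)%N /\ v = x g i.

Definition basis_enum (X : seq M) : Prop := uniq X /\ forall v, v \in X <-> basis_vec v.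

Lemma independent_basis_vecs (L : seq M) :
  uniq L -> (forall v, v \in L -> basis_vec v) -> independent L.
Proof.
move=> uL vecL; split=> // c sum0 w wL.
have [s [def_L s_valid]] : exists s : seq (G * nat),
    map (fun p => xp p) s = L /\ forall p, List.In p s -> (1 <= p.2 <= k p.1)%N.
  elim: L {uL sum0 wL} vecL => [|v L IH] vecL; first by exists [::].
  have [|s [<- s_valid]] := IH; first by move=> u uL; apply: vecL; rewrite inE uL orbT.
  have [g [i [gi ->]]] := vecL v (mem_head _ _).
  by exists ((g, i) :: s); split=> // p [<- | /s_valid].
move: wL; rewrite -def_L => /map_mem_In [p ps ->].
have nd_s : List.NoDup s by apply: (uniq_map_NoDup (f := fun p => xp p)); rewrite def_L.
apply: (@x_direct s (fun p => c (xp p))) => //.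
by rewrite -[RHS]sum0 -def_L big_map.
Qed.

Lemma span_sum_x (L : seq M) (s : seq (G * nat)) (r : G * nat -> R) : uniq L ->
  (forall p, List.In p s -> xp p \in L) -> spanned_by L (\sum_(p <- s) r p *: xp p).
Proof.
move=> uL s_in; elim: s s_in => [|p s IH] s_in; first by rewrite big_nil; apply: span0.
rewrite big_cons; apply: spanD; last by apply: IH => q qs; apply: s_in; right.
by apply/spanZ/span_mem/s_in => //; left.
Qed.

Lemma exists_basis_enum : fin_gen_mod M -> exists X, basis_enum X.
Proof.
move=> [gs gen].
have [X [uX vecX span_gs]] : exists X, [/\ uniq X, forall v, v \in X -> basis_vec v
    & forall w, w \in gs -> spanned_by X w].
  elim: gs {gen} => [|a gs [X [uX vecX span_gs]]]; first by exists [::].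
  have [s [r [s_valid def_a]]] := x_span a.
  set X' := undup (X ++ map (fun p => xp p) s).
  have uX' : uniq X' := undup_uniq _.
  exists X'; split=> // [v | w].
    rewrite mem_undup mem_cat => /orP[/vecX // | /map_mem_In [p ps ->]].
    by exists p.1, p.2; split=> //; apply: s_valid.
  rewrite inE => /orP[/eqP -> | /span_gs]; last first.
    by apply: span_trans => u u_in; apply: span_mem; rewrite // mem_undup mem_cat u_in.
  rewrite def_a; apply: span_sum_x => // p ps.
  by rewrite mem_undup mem_cat (In_map_mem (fun p => xp p) ps) orbT.
have span_X m : spanned_by X m.
  by have [c ->] := gen m; apply: span_sum => j _; apply/spanZ/span_gs/mem_nth.
exists X; split=> // v; split; first exact: vecX.
case=> g [i [gi ->]]; apply: contraT => xgi_notin.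
have ind : independent (x g i :: X).
  apply: independent_basis_vecs; first by rewrite /= xgi_notin.
  by move=> u; rewrite inE => /orP[/eqP -> | /vecX //]; exists g, i.
by case/eqP: (x_neq0 gi); apply: independent_cons_span ind (span_X _).
Qed.

Section Enumerated.
Variable X : seq M.
Hypothesis enumX : basis_enum X.

Lemma basis_enum_independent : independent X.
Proof. by case: enumX => uX memX; apply: independent_basis_vecs => // v /memX. Qed.

Lemma basis_enum_simple : simple_seq X.
Proof. by case: enumX => _ memX v /memX [g [i [gi ->]]]; apply: x_simple. Qed.

Lemma basis_enum_span (m : M) : spanned_by X m.
Proof.
case: enumX => uX memX; have [s [r [s_valid ->]]] := x_span m.
by apply: span_sum_x => // p /s_valid pv; apply/memX; exists p.1, p.2.
Qed.

Lemma span_ker j (w : M) : lin_iter phi j w = 0 ->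
  spanned_by [seq v <- X | lin_iter phi j v == 0] w.
Proof.
move=> fw0; have [uX memX] := enumX; have [c def_w] := basis_enum_span w.
set X' := [seq v <- X | lin_iter phi j v != 0].
have fX' v : v \in X' -> exists g i, [/\ (1 <= i <= k g)%N, (i + j <= k g)%N,
    v = x g i & lin_iter phi j v = x g (i + j)].
  rewrite mem_filter => /andP[fv_neq0 /memX [g [i [gi def_v]]]].
  have le_ijk : (i + j <= k g)%N by move: fv_neq0; rewrite def_v lin_iter_x_eq0 // -leqNgt.
  by exists g, i; rewrite def_v lin_iter_x // le_ijk.
have f_inj : {in X' &, injective (lin_iter phi j)}.
  move=> _ _ /fX' [g [i [gi le_ijk -> ->]]] /fX' [h [i' [hi' le_ijh -> ->]]].
  by case/x_inj=> [|| -> eq_ii']; [lia | lia | congr (x h _); lia].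
have ind_fX' : independent (map (lin_iter phi j) X').
  apply: independent_basis_vecs; first by rewrite map_inj_in_uniq ?filter_uniq.
  by move=> _ /mapP [v /fX' [g [i [gi le_ijk _ ->]]] ->]; exists g, (i + j); split=> //; lia.
have sum_fX' : \sum_(v <- X') c v *: lin_iter phi j v = 0.
  rewrite -[RHS]fw0 def_w linear_sum big_filter big_mkcond; apply: eq_bigr => v _ /=.
  by rewrite linearZ; case: eqP => //= ->; rewrite scaler0.
have coef0 v : v \in X -> lin_iter phi j v != 0 -> c v *: v = 0.
  move=> vX fv_neq0; have vX' : v \in X' by rewrite mem_filter fv_neq0.
  have [g [i [gi _ def_v _]]] := fX' v vX'.
  apply: (simple_cyclic_ker (f := lin_iter phi j) _ fv_neq0).
    by rewrite def_v; apply: x_simple.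
  by rewrite linearZ; apply: independent_map ind_fX' f_inj sum_fX' v vX'.
exists c; rewrite def_w big_filter [RHS]big_mkcond; apply: eq_big_seq => v vX /=.
by case: eqP => // /eqP; apply: coef0.
Qed.

Lemma count_ker_ge (L : seq M) j : independent L -> simple_seq L ->
  (count (fun v => lin_iter phi j v == 0%R) L <=
   count (fun v => lin_iter phi j v == 0%R) X)%N.
Proof.
move=> indL simpleL; rewrite -!size_filter; have [uX _] := enumX.
apply: independent_size_le.
- by apply: (independent_sub basis_enum_independent (filter_uniq _ uX)) => v;
    rewrite mem_filter => /andP[].
- by move=> v; rewrite mem_filter => /andP[_ /basis_enum_simple].
- by apply: (independent_sub indL (filter_uniq _ indL.1)) => v; rewrite mem_filter => /andP[].
- by move=> v; rewrite mem_filter => /andP[_ /simpleL].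
- by move=> v; rewrite mem_filter => /andP[/eqP /span_ker].
Qed.

End Enumerated.

Lemma nil_index_x n g i : (1 <= i <= k g)%N -> (k g - i < n)%N ->
  nil_index phi n (x g i) = (k g - i).+1.
Proof.
elim: n i => // n IH i gi lt_kin; rewrite /= (negbTE (x_neq0 gi)).
have [lt_ik | ge_ik] := ltnP i (k g).
  by rewrite phi_x ?IH ?(andP gi).1 //; lia.
have -> : i = k g by apply/eqP; rewrite eqn_leq ge_ik (andP gi).2.
by rewrite phi_x_last subnn; case: (n) => //= n'; rewrite eqxx.
Qed.

Section NilIndex.
Variable N : nat.
Hypothesis k_le_N : forall g, (k g <= N)%N.

Lemma lin_iter_eq0_nil_index j v : basis_vec v ->
  (lin_iter phi j v == 0) = (nil_index phi N v <= j)%N.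
Proof.
case=> g [i [gi ->]]; rewrite lin_iter_x_eq0 // nil_index_x //; first lia.
by have := k_le_N g; lia.
Qed.

Variable X : seq M.
Hypothesis enumX : basis_enum X.

Lemma chain_headsP v : v \in chain_heads phi X -> exists g, v = x g 1.
Proof.
have [uX memX] := enumX.
rewrite mem_filter => /andP[not_phi /memX [g [i [gi def_v]]]]; exists g.
rewrite def_v; case: (ltnP 1 i) => [lt1i | le_i1]; last by congr (x g _); lia.
case/mapP: not_phi; exists (x g i.-1); first by apply/memX; exists g, i.-1; split=> //; lia.
by rewrite def_v phi_x ?prednK //; lia.
Qed.

Lemma x_head_in_chain_heads g : x g 1 \in chain_heads phi X.
Proof.
have [uX memX] := enumX; have g1 : (1 <= 1 <= k g)%N by rewrite k_gt0.
rewrite mem_filter (iffRL (memX _)) ?andbT; last by exists g, 1%N.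
apply/mapP=> -[_ /memX [h [j [hj ->]]]] /esym.
rewrite -[phi _]/(lin_iter phi 1 (x h j)) lin_iter_x //; case: ifP => [le_j1h | _].
  by case/x_inj => // [|_]; lia.
by apply/eqP; rewrite eq_sym x_neq0.
Qed.

Lemma nil_index_head g : nil_index phi N (x g 1) = k g.
Proof.
by rewrite nil_index_x ?k_gt0 ?subn1 ?prednK //; have := k_le_N g; have := k_gt0 g; lia.
Qed.

Lemma nil_index_chain_heads_gt0 : 0%N \notin map (nil_index phi N) (chain_heads phi X).
Proof.
apply/mapP => -[_ /chain_headsP [g ->]]; rewrite nil_index_head => k0.
by have := k_gt0 g; rewrite -k0.
Qed.

(* [down] maps the heads of nil index >= j bijectively onto the base vectors of nil index j. *)
Lemma count_nil_index j : (0 < j)%N ->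
  count (fun v => nil_index phi N v == j) X =
  count (fun t => j <= nil_index phi N t)%N (chain_heads phi X).
Proof.
move=> j_gt0; have [uX memX] := enumX.
pose down t := lin_iter phi (nil_index phi N t - j) t.
have down_x g : (j <= k g)%N -> down (x g 1) = x g (k g - j).+1.
  move=> le_jk; rewrite /down nil_index_head lin_iter_x ?k_gt0 // ifT; last lia.
  by congr (x g _); lia.
rewrite -!size_filter -[RHS](size_map down).
apply/perm_size/uniq_perm; first exact: filter_uniq uX.
  rewrite map_inj_in_uniq; first exact/filter_uniq/filter_uniq.
  move=> t t'; rewrite mem_filter => /andP[le_jt /chain_headsP [g def_t]].
  rewrite mem_filter => /andP[le_jt' /chain_headsP [h def_t']]; move: le_jt le_jt'.
  rewrite def_t def_t' !nil_index_head => le_jg le_jh; rewrite !down_x //.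
  by case/x_inj=> [|| -> //]; lia.
move=> v; rewrite mem_filter.
apply/andP/mapP => [[/eqP idx_v /memX [g [i [gi def_v]]]] | [t]].
  move: idx_v; rewrite def_v nil_index_x //; last by have := k_le_N g; lia.
  move=> idx_v; exists (x g 1); last by rewrite down_x; [congr (x g _) |]; lia.
  by rewrite mem_filter nil_index_head x_head_in_chain_heads andbT; lia.
rewrite mem_filter => /andP[le_jt /chain_headsP [g def_t]] ->.
move: le_jt; rewrite def_t nil_index_head => le_jk.
rewrite down_x // nil_index_x; try lia; last by have := k_le_N g; lia.
by split; [apply/eqP; lia | apply/memX; exists g, (k g - j).+1; split=> //; lia].
Qed.

Lemma count_chain_heads_geq j : (0 < j)%N ->
  count (fun t => j <= nil_index phi N t)%N (chain_heads phi X) =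
  (count (fun v => lin_iter phi j v == 0%R) X -
   count (fun v => lin_iter phi j.-1 v == 0%R) X)%N.
Proof.
have [_ memX] := enumX.
have ker_idx n : count (fun v => lin_iter phi n v == 0%R) X =
    count (fun v => nil_index phi N v <= n)%N X.
  by apply: eq_in_count => v /memX /lin_iter_eq0_nil_index ->.
by case: j => // j _; rewrite -count_nil_index // !ker_idx count_leq_split addnK.
Qed.

End NilIndex.

End JordanBase.

Section TwoBases.
Variables (R : pzRingType) (M : lmodType R) (phi : {linear M -> M}).
Variables (Gam Del : Type) (k : Gam -> nat) (l : Del -> nat).
Variables (x : Gam -> nat -> M) (y : Del -> nat -> M).
Hypotheses (jbx : nilpotent_jordan_base phi k x) (jby : nilpotent_jordan_base phi l y).
Variables (X Y : seq M).
Hypotheses (enumX : basis_enum k x X) (enumY : basis_enum l y Y).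

Lemma count_ker_eq j :
  count (fun v => lin_iter phi j v == 0) X = count (fun v => lin_iter phi j v == 0) Y.
Proof.
apply/eqP; rewrite eqn_leq.
have le_XY := count_ker_ge jby enumY j (basis_enum_independent jbx enumX)
  (basis_enum_simple jbx enumX).
have le_YX := count_ker_ge jbx enumX j (basis_enum_independent jby enumY)
  (basis_enum_simple jby enumY).
by rewrite le_XY le_YX.
Qed.

Lemma perm_eq_nil_index_chain_heads N :
  (forall g, k g <= N)%N -> (forall d, l d <= N)%N ->
  perm_eq (map (nil_index phi N) (chain_heads phi X))
          (map (nil_index phi N) (chain_heads phi Y)).
Proof.
move=> k_le_N l_le_N; apply: perm_eq_count_geq => [||j j_gt0].
- exact: (nil_index_chain_heads_gt0 jbx k_le_N enumX).
- exact: (nil_index_chain_heads_gt0 jby l_le_N enumY).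
- rewrite !count_map (count_chain_heads_geq jbx k_le_N enumX) //.
  by rewrite (count_chain_heads_geq jby l_le_N enumY) // !count_ker_eq.
Qed.

End TwoBases.

Unset Implicit Arguments.

Theorem proposition2p2 (R : pzRingType) (M : lmodType R) (phi : {linear M -> M})
    (Gam Del : Type) (k : Gam -> nat) (l : Del -> nat)
    (x : Gam -> nat -> M) (y : Del -> nat -> M) :
  fin_gen_mod M -> semisimple_mod M -> nilpotent_endo phi ->
  nilpotent_jordan_base phi k x -> nilpotent_jordan_base phi l y ->
  exists pi : Gam -> Del, bijective pi /\ forall g : Gam, k g = l (pi g).
Proof.
(* Semisimplicity and nilpotency are consequences of having a nilpotent Jordan normal base. *)
move=> fg _ _ jbx jby.
have [X enumX] := exists_basis_enum jbx fg.
have [Y enumY] := exists_basis_enum jby fg.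
have [Kx k_le] : exists K, forall g, (k g <= K)%N by case: jbx => _ [_ [_ [_ [_ []]]]].
have [Ky l_le] : exists K, forall d, (l d <= K)%N by case: jby => _ [_ [_ [_ [_ []]]]].
have k_le_N g : (k g <= Kx + Ky)%N by have := k_le g; lia.
have l_le_N d : (l d <= Kx + Ky)%N by have := l_le d; lia.
have [pi [bij_pi nil_index_pi]] := bijection_of_perm_eq
  (filter_uniq _ enumX.1) (filter_uniq _ enumY.1) (x_head_inj jbx) (x_head_inj jby)
  (x_head_in_chain_heads jbx enumX) (chain_headsP jbx enumX)
  (x_head_in_chain_heads jby enumY) (chain_headsP jby enumY)
  (perm_eq_nil_index_chain_heads jbx jby enumX enumY k_le_N l_le_N).
exists pi; split=> // g.
by have := nil_index_pi g; rewrite (nil_index_head jbx k_le_N) (nil_index_head jby l_le_N).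
Qed.
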